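(* Let $K$ be a field of characteristic $0$, let $\alpha \in K$, and let $m,n$ be relatively prime positive integers. Then $\lambda_K(\alpha,m)\,\lambda_K(\alpha,n) = \lambda_K(\alpha,mn)$.
   Context: For a field $K$, an element $\alpha \in K$ and a positive integer $n$, $\lambda_K(\alpha,n)$ denotes the minimal degree of an irreducible factor of $t^n - \alpha$ in $K[t]$. *)

From mathcomp Require Import all_boot all_algebra.
Set Implicit Arguments. Unset Strict Implicit. Unset Printing Implicit Defensive.
Import GRing.Theory.
Local Open Scope ring_scope.

(* is_lambda K a n d  <->  d = lambda_K(a, n), i.e. d is the minimal degree of
   an irreducible factor of t^n - a in K[t]. *)
Definition is_lambda (K : fieldType) (a : K) (n : nat) (d : nat) : Prop :=
  (exists p : {poly K},
      irreducible_poly p /\ p %| ('X^n - a%:P) /\ (size p).-1 = d) /\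
  (forall p : {poly K},
      irreducible_poly p -> p %| ('X^n - a%:P) -> (d <= (size p).-1)%N).

From mathcomp Require Import all_boot all_algebra all_field.
From Stdlib Require Import Classical Wf_nat.
From mathcomp Require Import ring.
Set Implicit Arguments. Unset Strict Implicit. Unset Printing Implicit Defensive.
Import GRing.Theory.
Local Open Scope ring_scope.

(* For a <> 0 we prove more: lambda := lambda_K(a, n) divides n and the degree
   of every irreducible factor of t^n - a, and these strong lambdas are
   multiplicative on coprime m, n.  Divisibility: if x is a root of an
   irreducible factor of t^(mn) - a, then x^n and x^m are roots of t^m - a and
   t^n - a, so lambda(a, m) and lambda(a, n) divide [K(x) : K].  Attainment: if
   c^m = a = d^n in a tower of degree lambda(a, m) lambda(a, n), then
   (cd)^(mn) = a^(m + n) with m + n coprime to mn, and Bezout turns this into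
   an mn-th root of a inside the tower.

   Factoring n, it remains to treat n = p^k.  If K contains a primitive p-th
   root of unity, Kummer theory makes every step of the tower
   K <= K(x^(p^(k-1))) <= ... <= K(x) of degree 1 or p, so all factor degrees
   are powers of p.  Otherwise x |-> x^p is injective on K.  Take a factor f
   whose degree c p^i has minimal p-adic valuation; the norm N of a root of f
   satisfies N^(p^k) = a^(c p^i), so Bezout and injectivity give b with
   b^(p^(k-i)) = a, and any irreducible factor of t^(p^i) - b divides
   t^(p^k) - a. *)

Local Notation "p ^^ L" := (map_poly (in_alg L) p) (at level 30).

Lemma coprime_Bezout_nat m n :
  (0 < m)%N -> coprime m n -> exists s t, (s * m = 1 + t * n)%N.
Proof.
move=> m_gt0 /eqP cop_mn; have [t _] := Bezoutl n m_gt0; rewrite cop_mn => dvd_m.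
by exists ((1 + t * n) %/ m)%N, t; rewrite divnK.
Qed.

Lemma expr_Bezout_root (F : fieldType) (A y : F) u v s t :
  A != 0 -> (s * u = 1 + t * v)%N -> y ^+ v = A ^+ u -> (y ^+ s / A ^+ t) ^+ v = A.
Proof.
move=> A_neq0 Bst yvA; rewrite exprMn exprVn -!exprM mulnC exprM yvA -exprM.
by rewrite mulnC Bst exprD expr1 -mulrA mulfV ?mulr1 // expf_neq0.
Qed.

Section Polynomials.
Variable K : fieldType.
Implicit Types (a : K) (f g p : {poly K}).

Lemma irredp_deg_gt0 f : irreducible_poly f -> (0 < (size f).-1)%N.
Proof. by case=> size_f _; rewrite -ltnS prednK // (ltn_trans _ size_f). Qed.

Lemma irredp_dvdp_exists p : (1 < size p)%N -> exists2 r, irreducible_poly r & r %| p.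
Proof.
elim: {p}(size p) {-2}p (leqnn (size p)) => [|N IH] p le_p size_p.
  by move: (leq_trans size_p le_p).
have [irr_p|red_p] := classic (irreducible_poly p); first by exists p.
have [q [q_neq1 q_dvd_p q_neqp]] :
    exists q : {poly K}, [/\ size q != 1%N, q %| p & ~~ (q %= p)].
  apply: NNPP => no_q; apply: red_p; split => // q q_neq1 q_dvd_p.
  by apply: NNPP => q_neqp; apply: no_q; exists q; split => //; apply/negP.
have p_neq0 : p != 0 by rewrite -size_poly_gt0 (ltn_trans _ size_p).
have q_neq0 : q != 0 by apply: contraNneq p_neq0 => q0; rewrite -(dvd0p p) -q0.
have lt_qp : (size q < size p)%N.
  rewrite ltn_neqAle dvdp_leq // andbT; apply: contra q_neqp => /eqP e.
  by rewrite -dvdp_size_eqp // e.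
have le_qN : (size q <= N)%N by rewrite -ltnS (leq_trans lt_qp).
have gt1_q : (1 < size q)%N by rewrite ltn_neqAle eq_sym q_neq1 size_poly_gt0.
have [r irr_r r_dvd_q] := IH q le_qN gt1_q.
by exists r => //; apply: dvdp_trans r_dvd_q q_dvd_p.
Qed.

Lemma XnsubC_neq0 n a : (0 < n)%N -> 'X^n - a%:P != 0.
Proof. by move=> n_gt0; rewrite monic_neq0 // monicXnsubC. Qed.

Lemma deg_dvd_XnsubC n a f :
  (0 < n)%N -> f %| 'X^n - a%:P -> ((size f).-1 <= n)%N.
Proof.
move=> n_gt0 /(dvdp_leq (XnsubC_neq0 a n_gt0)); rewrite size_XnsubC //.
by rewrite -subn1 leq_subLR add1n.
Qed.

Lemma exists_irredp_dvd_XnsubC n a : (0 < n)%N ->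
  exists f, [/\ irreducible_poly f, f %| 'X^n - a%:P & ((size f).-1 <= n)%N].
Proof.
move=> n_gt0; have size_gt1 : (1 < size ('X^n - a%:P)%R)%N by rewrite size_XnsubC.
have [f irr_f f_dvd] := irredp_dvdp_exists size_gt1.
by exists f; rewrite (deg_dvd_XnsubC n_gt0 f_dvd).
Qed.

Section Extension.
Variable L : fieldExtType K.

Lemma map_XnsubC n a : ('X^n - a%:P) ^^ L = 'X^n - (a%:A)%:P.
Proof. by rewrite rmorphB /= map_polyXn map_polyC. Qed.

Lemma root_map_XnsubC (y : L) n a : root (('X^n - a%:P) ^^ L) y = (y ^+ n == a%:A).
Proof. by rewrite map_XnsubC rootE !hornerE subr_eq0. Qed.

Lemma root_map_dvdp (x : L) f p : root (f ^^ L) x -> f %| p -> root (p ^^ L) x.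
Proof. by move=> root_fx /dvdpP[q ->]; rewrite rmorphM rootM root_fx orbT. Qed.

Lemma minPoly_irredp_dvd (y : L) p : p != 0 -> root (p ^^ L) y ->
  exists f, [/\ irreducible_poly f, f %| p & (size f).-1 = \dim <<1; y>>%VS].
Proof.
move=> p_neq0 root_py; have /polyOver1P[f Df] := minPolyOver 1%VS y.
have size_f : size f = (adjoin_degree 1%VS y).+1.
  by rewrite -(size_map_poly (in_alg L)) -Df size_minPoly.
exists f; split.
- split=> [|g g_neq1 g_dvd_f]; first by rewrite size_f ltnS /adjoin_degree.
  have := @minPoly_irr _ _ 1%VS y (g ^^ L).
  rewrite Df dvdp_map => /(_ (alg_polyOver _ _) g_dvd_f) /orP[|] //.
    by rewrite eqp_map.
  by rewrite -size_poly_eq1 size_map_poly (negPf g_neq1).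
- rewrite -(dvdp_map (in_alg L)) -Df; apply: minPoly_dvdp => //.
  exact: alg_polyOver.
- by rewrite size_f dim_Fadjoin dimv1 muln1.
Qed.

Lemma dim_adjoin_dvd (y : L) : (\dim <<1; y>>%VS %| \dim {:L})%N.
Proof. exact: (@field_dimS _ _ <<1; y>>%AS (aspacef L) (subvf _)). Qed.

Lemma adjoin_degree_le (E : {subfield L}) (z : L) g : g != 0 -> root (g ^^ L) z ->
  (adjoin_degree E z <= (size g).-1)%N.
Proof.
move=> g_neq0 root_gz; have := minPoly_dvdp (alg_polyOver E g) root_gz.
move/dvdp_leq; rewrite map_poly_eq0 size_minPoly size_map_poly => /(_ g_neq0).
by move=> lt_deg; rewrite -ltnS prednK ?size_poly_gt0.
Qed.

Lemma dim_adjoin2_le (x y : L) f g : f != 0 -> g != 0 ->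
  root (f ^^ L) x -> root (g ^^ L) y ->
  (\dim << <<1; x>>; y>>%VS <= (size f).-1 * (size g).-1)%N.
Proof.
move=> f_neq0 g_neq0 root_fx root_gy.
rewrite dim_Fadjoin dim_Fadjoin dimv1 muln1 mulnC.
by rewrite leq_mul // adjoin_degree_le.
Qed.

End Extension.
End Polynomials.

Definition strong_lambda (K : fieldType) (a : K) (n d : nat) :=
  [/\ (d %| n)%N,
      exists f, [/\ irreducible_poly f, f %| 'X^n - a%:P & (size f).-1 = d] &
      forall f, irreducible_poly f -> f %| 'X^n - a%:P -> (d %| (size f).-1)%N].

Section StrongLambda.
Variable K : fieldType.
Implicit Types (a : K) (f g h : {poly K}).

Lemma strong_lambdaP a n d : (d %| n)%N ->
  (forall f, irreducible_poly f -> f %| 'X^n - a%:P -> (d %| (size f).-1)%N) ->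
  (exists f, [/\ irreducible_poly f, f %| 'X^n - a%:P & ((size f).-1 <= d)%N]) ->
  strong_lambda a n d.
Proof.
move=> d_dvd_n d_dvd_deg [f [irr_f f_dvd le_fd]]; split=> //.
exists f; split=> //; apply/eqP; rewrite eqn_leq le_fd /=.
by rewrite dvdn_leq ?irredp_deg_gt0 ?d_dvd_deg.
Qed.

Lemma strong_lambda_is_lambda a n d e : strong_lambda a n d -> is_lambda a n e -> e = d.
Proof.
case=> _ [f [irr_f f_dvd deg_f]] d_dvd_deg [[g [irr_g [g_dvd deg_g]]] min_e].
apply/eqP; rewrite eqn_leq -{1}deg_f min_e //= -deg_g.
by rewrite dvdn_leq ?irredp_deg_gt0 ?d_dvd_deg.
Qed.

Lemma strong_lambda0 n : (0 < n)%N -> strong_lambda (0 : K) n 1.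
Proof.
move=> n_gt0; split=> //; exists 'X; split; rewrite ?size_polyX //.
  by have := irredp_XsubC (0 : K); rewrite polyC0 subr0.
by rewrite polyC0 subr0 -(prednK n_gt0) exprS dvdp_mulr.
Qed.

Lemma coprime_addn_muln m n : coprime m n -> coprime (m + n) (m * n).
Proof.
move=> cop_mn; rewrite coprimeMr !(coprime_sym (m + n)) /coprime gcdnDl.
by rewrite addnC gcdnDl (gcdnC n) andbb.
Qed.

Lemma strong_lambda_mul_dvd a m n dm dn f :
  (0 < m)%N -> (0 < n)%N -> coprime m n ->
  strong_lambda a m dm -> strong_lambda a n dn ->
  irreducible_poly f -> f %| 'X^(m * n) - a%:P -> (dm * dn %| (size f).-1)%N.
Proof.
move=> m_gt0 n_gt0 cop_mn [dm_dvd_m _ dvd_m] [dn_dvd_n _ dvd_n] irr_f f_dvd.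
have [L dimL [x root_fx _]] := irredp_FAdjoin irr_f.
have xmn : x ^+ (m * n) == a%:A by rewrite -root_map_XnsubC (root_map_dvdp root_fx).
have cop_d : coprime dm dn by rewrite (coprime_dvdl dm_dvd_m) ?(coprime_dvdr dn_dvd_n).
have dvd_deg (y : L) : (\dim <<1; y>>%VS %| (size f).-1)%N.
  by rewrite -dimL dim_adjoin_dvd.
rewrite Gauss_dvd //; apply/andP; split.
- have root_m : root (('X^m - a%:P) ^^ L) (x ^+ n).
    by rewrite root_map_XnsubC -exprM mulnC.
  have [g [irr_g g_dvd deg_g]] := minPoly_irredp_dvd (XnsubC_neq0 a m_gt0) root_m.
  by rewrite (dvdn_trans (dvd_m g irr_g g_dvd)) // deg_g.
- have root_n : root (('X^n - a%:P) ^^ L) (x ^+ m) by rewrite root_map_XnsubC -exprM.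
  have [h [irr_h h_dvd deg_h]] := minPoly_irredp_dvd (XnsubC_neq0 a n_gt0) root_n.
  by rewrite (dvdn_trans (dvd_n h irr_h h_dvd)) // deg_h.
Qed.

Lemma exists_irredp_dvd_mul_le a m n g h :
  a != 0 -> (0 < m)%N -> (0 < n)%N -> coprime m n ->
  irreducible_poly g -> g %| 'X^m - a%:P ->
  irreducible_poly h -> h %| 'X^n - a%:P ->
  exists f, [/\ irreducible_poly f, f %| 'X^(m * n) - a%:P &
              ((size f).-1 <= (size g).-1 * (size h).-1)%N].
Proof.
move=> a_neq0 m_gt0 n_gt0 cop_mn irr_g g_dvd irr_h h_dvd.
have [L1 _ [c root_gc _]] := irredp_FAdjoin irr_g.
have size_h1 : (1 < size (h ^^ L1))%N by rewrite size_map_poly; case: irr_h.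
have [r irr_r r_dvd] := irredp_dvdp_exists size_h1.
have [L2 _ [d root_rd _]] := irredp_FAdjoin irr_r.
pose L := baseFieldType L2.
have map_base p : p ^^ L = (p ^^ L1) ^^ L2.
  rewrite -map_poly_comp; apply: eq_map_poly => k /=.
  exact: baseField_scaleE.
pose c' : L := in_alg L2 c.
have root_gc' : root (g ^^ L) c' by rewrite map_base fmorph_root.
have root_hd : root (h ^^ L) (d : L) by rewrite map_base (root_map_dvdp root_rd r_dvd).
have cm : c' ^+ m = a%:A.
  by apply/eqP; rewrite -root_map_XnsubC (root_map_dvdp root_gc' g_dvd).
have dn : (d : L) ^+ n = a%:A.
  by apply/eqP; rewrite -root_map_XnsubC (root_map_dvdp root_hd h_dvd).
have [s [t st]] := coprime_Bezout_nat (ltn_addr n m_gt0) (coprime_addn_muln cop_mn).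
pose e : L := (c' * d) ^+ s / a%:A ^+ t.
have emn : e ^+ (m * n) = a%:A.
  apply: expr_Bezout_root st _; first by rewrite (fmorph_eq0 (in_alg L)).
  by rewrite exprMn exprM cm mulnC exprM dn -exprD addnC.
pose E := << <<1; c'>>; (d : L)>>%AS.
have e_in : e \in E.
  have c'_in : c' \in E by rewrite (subvP (subv_adjoin _ _)) ?memv_adjoin.
  by rewrite rpredM ?rpredV ?rpredX ?rpredM ?memv_adjoin ?memvZ ?mem1v.
have mn_gt0 : (0 < m * n)%N by rewrite muln_gt0 m_gt0.
have root_e : root (('X^(m * n) - a%:P) ^^ L) e by rewrite root_map_XnsubC emn.
have [f [irr_f f_dvd deg_f]] := minPoly_irredp_dvd (XnsubC_neq0 a mn_gt0) root_e.
exists f; split=> //; rewrite deg_f.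
apply: leq_trans (dim_adjoin2_le (irredp_neq0 irr_g) (irredp_neq0 irr_h) root_gc' root_hd).
by apply: dimvS; rewrite sub_adjoin1v.
Qed.

Lemma strong_lambda_mul a m n dm dn : a != 0 -> (0 < m)%N -> (0 < n)%N ->
  coprime m n -> strong_lambda a m dm -> strong_lambda a n dn ->
  strong_lambda a (m * n) (dm * dn).
Proof.
move=> a_neq0 m_gt0 n_gt0 cop_mn lam_m lam_n; apply: strong_lambdaP.
- by case: lam_m => ? _ _; case: lam_n => ? _ _; apply: dvdn_mul.
- by move=> f; apply: strong_lambda_mul_dvd.
- case: lam_m => _ [g [irr_g g_dvd <-]] _; case: lam_n => _ [h [irr_h h_dvd <-]] _.
  exact: exists_irredp_dvd_mul_le.
Qed.

End StrongLambda.

Section Kummer.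
Variables (K : fieldType) (L : fieldExtType K).

Lemma XnsubC_prim_root_prod (w y : L) p : p.-primitive_root w -> y != 0 ->
  'X^p - (y ^+ p)%:P = \prod_(z <- [seq y * w ^+ j | j <- iota 0 p]) ('X - z%:P).
Proof.
move=> prim_w y_neq0; have p_gt0 := prim_order_gt0 prim_w.
set rs := [seq _ | _ <- _].
have uniq_rs : uniq rs.
  rewrite map_inj_in_uniq ?iota_uniq // => i j; rewrite !mem_iota !add0n.
  move=> /andP[_ lt_ip] /andP[_ lt_jp] /(mulfI y_neq0) /eqP.
  by rewrite (eq_prim_root_expr prim_w) !modn_small // => /eqP.
have roots_rs : all (root ('X^p - (y ^+ p)%:P)) rs.
  apply/allP => z /mapP[j _ ->]; rewrite rootE !hornerE exprMn -exprM mulnC.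
  by rewrite exprM (prim_expr_order prim_w) expr1n mulr1 subrr.
have [q Dq] := uniq_roots_prod_XsubC roots_rs (etrans (uniq_rootsE rs) uniq_rs).
have prod_dvd : \prod_(z <- rs) ('X - z%:P) %| 'X^p - (y ^+ p)%:P.
  by rewrite Dq dvdp_mull.
apply/eqP; rewrite -eqp_monic ?monicXnsubC ?monic_prod_XsubC // eqp_sym.
by rewrite -dvdp_size_eqp // size_prod_XsubC size_XnsubC // size_map size_iota.
Qed.

Lemma prod_opp_scaled_powers (F : {subfield L}) (w y : L) n (zs : seq L) :
  w \in F -> w != 0 -> {subset zs <= [seq y * w ^+ j | j <- iota 0 n]} ->
  exists2 c, c \in F /\ c != 0 & \prod_(z <- zs) (- z) = c * y ^+ size zs.
Proof.
move=> w_in w_neq0; elim: zs => [|z zs IH] sub_zs.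
  by exists 1; rewrite ?big_nil ?mul1r ?expr0 ?rpred1 ?oner_neq0.
have [u zs_u|c [c_in c_neq0] Dc] := IH; first by apply: sub_zs; rewrite inE zs_u orbT.
have /mapP[j _ ->] := sub_zs z (mem_head _ _).
exists (- w ^+ j * c); last by rewrite big_cons Dc /= exprS; ring.
by rewrite rpredM ?rpredN ?rpredX // mulf_neq0 // oppr_eq0 expf_neq0.
Qed.

Lemma mem_coprime_expr (E : {subfield L}) (y : L) u v : (0 < u)%N -> coprime u v ->
  y ^+ u \in E -> y ^+ v \in E -> y \in E.
Proof.
move=> u_gt0 cop_uv yu_in yv_in; have [->|y_neq0] := eqVneq y 0; first exact: rpred0.
have [s [t Bst]] := coprime_Bezout_nat u_gt0 cop_uv.
have -> : y = (y ^+ u) ^+ s / (y ^+ v) ^+ t.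
  rewrite -!exprM mulnC Bst exprD expr1 mulnC -mulrA mulfV ?mulr1 //.
  by rewrite expf_neq0.
by rewrite rpredM ?rpredV // rpredX.
Qed.

Lemma minPoly_dvd_XnsubC (F : {subfield L}) (y : L) n :
  y ^+ n \in F -> minPoly F y %| 'X^n - (y ^+ n)%:P.
Proof.
move=> yn_in; apply: minPoly_dvdp; first by rewrite polyOverXnsubC.
by rewrite rootE !hornerE subrr.
Qed.

Section PrimitiveRoot.
Variables (F : {subfield L}) (w : L) (p : nat).
Hypotheses (prim_w : p.-primitive_root w) (w_in : w \in F).

(* The roots of minPoly F y lie among the y w^j, so its constant coefficient
   is y^(adjoin_degree F y) times a nonzero element of F. *)
Lemma expr_adjoin_degree_mem (y : L) : y != 0 -> y ^+ p \in F ->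
  y ^+ adjoin_degree F y \in F.
Proof.
move=> y_neq0 yp_in; have w_neq0 : w != 0.
  apply/eqP => w_eq0; have := prim_expr_order prim_w.
  by rewrite w_eq0 expr0n gtn_eqF ?(prim_order_gt0 prim_w) // => /eqP; rewrite eq_sym oner_eq0.
have := minPoly_dvd_XnsubC yp_in; rewrite (XnsubC_prim_root_prod prim_w y_neq0).
case/dvdp_prod_XsubC=> msk; set zs := mask msk _.
rewrite eqp_monic ?monic_minPoly ?monic_prod_XsubC // => /eqP Dmin.
have size_zs : size zs = adjoin_degree F y.
  by apply/succn_inj; rewrite -(size_prod_XsubC zs id) -Dmin size_minPoly.
have sub_zs : {subset zs <= [seq y * w ^+ j | j <- iota 0 p]}.
  by move=> z; apply: mem_mask.
have [c [c_in c_neq0] Dc] := prod_opp_scaled_powers w_in w_neq0 sub_zs.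
have : (minPoly F y).[0] \in F.
  by rewrite horner_coef0; apply/polyOverP; apply: minPolyOver.
rewrite Dmin horner_prod (eq_bigr (fun z => - z)) => [|z _]; last first.
  by rewrite hornerXsubC sub0r.
rewrite Dc size_zs => cy_in.
by rewrite -(mulKf c_neq0 (y ^+ _)) rpredM ?rpredV.
Qed.

Lemma kummer_adjoin_degree (y : L) : prime p -> y ^+ p \in F ->
  adjoin_degree F y = 1%N \/ adjoin_degree F y = p.
Proof.
move=> p_prime yp_in; have [->|y_neq0] := eqVneq y 0; first by rewrite adjoin0_deg; left.
have p_gt0 := prime_gt0 p_prime.
have le_deg_p : (adjoin_degree F y <= p)%N.
  have := dvdp_leq (XnsubC_neq0 _ p_gt0) (minPoly_dvd_XnsubC yp_in).
  by rewrite size_minPoly size_XnsubC.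
have [lt_deg_p|] := ltnP (adjoin_degree F y) p; last first.
  by move=> le_p_deg; right; apply/eqP; rewrite eqn_leq le_deg_p.
left; apply/eqP; rewrite adjoin_deg_eq1.
have deg_gt0 : (0 < adjoin_degree F y)%N by [].
have cop_deg_p : coprime (adjoin_degree F y) p.
  by rewrite coprime_sym prime_coprime // gtnNdvd.
exact: mem_coprime_expr deg_gt0 cop_deg_p (expr_adjoin_degree_mem y_neq0 yp_in) yp_in.
Qed.

End PrimitiveRoot.

End Kummer.

Section PrimePowerRoots.
Variables (K : fieldType) (L : fieldExtType K).

Lemma prim_root_in_alg (z : K) p : prime p -> z ^+ p = 1 -> z != 1 ->
  p.-primitive_root (z%:A : L).
Proof.
move=> p_prime zp z_neq1.
have wp : (z%:A : L) ^+ p = 1 by rewrite -(rmorphXn (in_alg L)) /= zp scale1r.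
have [d prim_d d_dvd_p] := prim_order_exists (prime_gt0 p_prime) wp.
have [d1|d_neq1] := eqVneq d 1%N; last by rewrite -(prime_nt_dvdP p_prime d_neq1 d_dvd_p).
move: prim_d; rewrite d1 => /prim_expr_order; rewrite expr1 => /eqP.
by rewrite (fmorph_eq1 (in_alg L)) (negPf z_neq1).
Qed.

Lemma dim_adjoin_ppow_root (z : K) (y : L) p j : prime p -> z ^+ p = 1 -> z != 1 ->
  y ^+ (p ^ j) \in 1%VS -> exists e, \dim <<1; y>>%VS = (p ^ e)%N.
Proof.
move=> p_prime zp z_neq1; have prim_w := prim_root_in_alg p_prime zp z_neq1.
have w_in (F : {subfield L}) : z%:A \in F by rewrite memvZ ?mem1v.
elim: j y => [|j IH] y y_in.
  by exists 0%N; move: y_in; rewrite expn0 expr1 => /Fadjoin_idP ->; rewrite dimv1.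
have [|e De] := IH (y ^+ p); first by rewrite -exprM -expnS.
have <- : << <<1; y ^+ p>>; y>>%VS = <<1; y>>%VS.
  by rewrite adjoinC; apply/Fadjoin_idP; rewrite rpredX ?memv_adjoin.
have yp_in : y ^+ p \in <<1; y ^+ p>>%AS by rewrite memv_adjoin.
rewrite dim_Fadjoin De.
have [->|->] := kummer_adjoin_degree prim_w (w_in _) p_prime yp_in.
  by exists e; rewrite mul1n.
by exists e.+1; rewrite expnS.
Qed.

End PrimePowerRoots.

Lemma irredp_dvd_ppow_deg (K : fieldType) (a z : K) p k f :
  prime p -> z ^+ p = 1 -> z != 1 ->
  irreducible_poly f -> f %| 'X^(p ^ k) - a%:P -> exists e, (size f).-1 = (p ^ e)%N.
Proof.
move=> p_prime zp z_neq1 irr_f f_dvd.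
have [L dimL [x root_fx full]] := irredp_FAdjoin irr_f.
have /eqP xpk : x ^+ (p ^ k) == a%:A by rewrite -root_map_XnsubC (root_map_dvdp root_fx).
rewrite -dimL -full; apply: (dim_adjoin_ppow_root (j := k)) p_prime zp z_neq1 _.
by rewrite xpk memvZ ?mem1v.
Qed.

Section Norm.
Variables (K : fieldType) (L : fieldExtType K).

Definition lnorm (u : L) : K :=
  \det (passmx.mxof (vbasis {:L}) (vbasis {:L}) (amulr u)).

Let basis_L : basis_of {:L} (vbasis {:L}) := vbasisP {:L}.

Lemma lnormM u v : lnorm (u * v) = lnorm u * lnorm v.
Proof.
rewrite /lnorm (_ : amulr (u * v) = (amulr v \o amulr u)%VF).
  by rewrite (@passmx.mxof_comp _ _ _ _ _ _ _ basis_L) det_mulmx.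
by apply/lfunP => w; rewrite comp_lfunE !lfunE /= mulrA.
Qed.

Lemma lnorm_alg (c : K) : lnorm c%:A = c ^+ \dim {:L}.
Proof.
rewrite /lnorm (_ : amulr c%:A = c *: \1%VF); last first.
  by apply/lfunP => w; rewrite !lfunE /= id_lfunE mulr_algr.
rewrite -[c *: _]addr0 passmx.mxof_linear.
have /eqP -> : passmx.mxof (vbasis {:L}) (vbasis {:L}) 0 == 0 by rewrite passmx.mxof_eq0.
by rewrite addr0 passmx.mxof1 ?(basis_free basis_L) // scalemx1 det_scalar.
Qed.

Lemma lnormX u n : lnorm (u ^+ n) = lnorm u ^+ n.
Proof.
elim: n => [|n IH]; last by rewrite !exprS lnormM IH.
by rewrite !expr0 -[1 in LHS]scale1r lnorm_alg expr1n.
Qed.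

Lemma lnorm_root (x : L) n (a : K) : x ^+ n = a%:A -> lnorm x ^+ n = a ^+ \dim {:L}.
Proof. by move=> xn; rewrite -lnormX xn lnorm_alg. Qed.

End Norm.

Section PrimePower.
Variable K : fieldType.

Lemma expr_ppow_inj p j (x y : K) : (forall z : K, z ^+ p = 1 -> z = 1) ->
  y != 0 -> x ^+ (p ^ j) = y ^+ (p ^ j) -> x = y.
Proof.
move=> root1_p y_neq0 xy; have root1_pj i (z : K) : z ^+ (p ^ i) = 1 -> z = 1.
  by elim: i z => [|i IH] z; rewrite ?expn0 ?expr1 // expnSr exprM => /root1_p /IH.
suff xy1 : x / y = 1 by rewrite -(divfK y_neq0 x) xy1 mul1r.
by apply: (root1_pj j); rewrite exprMn exprVn xy mulfV // expf_neq0.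
Qed.

Lemma exists_irredp_dvd_ppow_le (a : K) p k f0 : prime p -> a != 0 ->
  (forall z : K, z ^+ p = 1 -> z = 1) ->
  irreducible_poly f0 -> f0 %| 'X^(p ^ k) - a%:P ->
  exists f, [/\ irreducible_poly f, f %| 'X^(p ^ k) - a%:P &
              ((size f).-1 <= p ^ logn p (size f0).-1)%N].
Proof.
move=> p_prime a_neq0 root1_p irr_f0 f0_dvd; set i := logn p _.
have [L dimL [x root_f0x _]] := irredp_FAdjoin irr_f0.
have /eqP xpk : x ^+ (p ^ k) == a%:A by rewrite -root_map_XnsubC (root_map_dvdp root_f0x).
have [c cop_pc Ddeg] := pfactor_coprime p_prime (irredp_deg_gt0 irr_f0).
have c_gt0 : (0 < c)%N by move: (irredp_deg_gt0 irr_f0); rewrite Ddeg muln_gt0 => /andP[].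
have cop_c_pk : coprime c (p ^ k) by rewrite coprime_sym coprimeXl.
have [s [t Bst]] := coprime_Bezout_nat c_gt0 cop_c_pk.
pose b := lnorm x ^+ s / (a ^+ (p ^ i)) ^+ t.
have b_pk : b ^+ (p ^ k) = a ^+ (p ^ i).
  rewrite /b; apply: expr_Bezout_root Bst _; first by rewrite expf_neq0.
  by rewrite (lnorm_root xpk) dimL Ddeg mulnC exprM.
have i_le_k : (i <= k)%N.
  rewrite -(leq_exp2l _ _ (prime_gt1 p_prime)) (leq_trans _ (deg_dvd_XnsubC _ f0_dvd)) //.
    by rewrite dvdn_leq ?irredp_deg_gt0 // Ddeg dvdn_mull.
  by rewrite expn_gt0 prime_gt0.
have Dpk : (p ^ k = p ^ i * p ^ (k - i))%N by rewrite -expnD subnKC.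
have b_root : b ^+ (p ^ (k - i)) = a.
  by apply: (expr_ppow_inj (j := i) root1_p) => //; rewrite -exprM mulnC -Dpk.
have pi_gt0 : (0 < p ^ i)%N by rewrite expn_gt0 prime_gt0.
have [f [irr_f f_dvd le_f]] := exists_irredp_dvd_XnsubC b pi_gt0.
exists f; split=> //; apply: dvdp_trans f_dvd _.
by rewrite Dpk exprM -b_root rmorphXn subrXX dvdp_mulr.
Qed.

Lemma exists_irredp_dvd_min (P : {poly K}) (mu : {poly K} -> nat) : (1 < size P)%N ->
  exists f0, [/\ irreducible_poly f0, f0 %| P &
    forall f, irreducible_poly f -> f %| P -> (mu f0 <= mu f)%N].
Proof.
move=> size_P; have [f irr_f f_dvd] := irredp_dvdp_exists size_P.
pose Q i := exists f, [/\ irreducible_poly f, f %| P & mu f = i].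
have Q_dec i : Q i \/ ~ Q i := classic (Q i).
have [|i [[[f0 [irr_f0 f0_dvd <-]] min_i] _]] :=
  @dec_inh_nat_subset_has_unique_least_element Q Q_dec; first by exists (mu f), f.
by exists f0; split=> // g irr_g g_dvd; apply/leP/min_i; exists g.
Qed.

Lemma strong_lambda_ppow (a : K) p k : a != 0 -> prime p ->
  exists d, strong_lambda a (p ^ k) d.
Proof.
move=> a_neq0 p_prime; have pk_gt0 : (0 < p ^ k)%N by rewrite expn_gt0 prime_gt0.
have [|f0 [irr_f0 f0_dvd min_f0]] :=
  exists_irredp_dvd_min (fun f => logn p (size f).-1) (_ : 1 < size ('X^(p ^ k) - a%:P)%R)%N.
  by rewrite size_XnsubC.
set i := logn p _ in min_f0; exists (p ^ i)%N.
have dvd_deg f : irreducible_poly f -> f %| 'X^(p ^ k) - a%:P -> (p ^ i %| (size f).-1)%N.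
  by move=> irr_f f_dvd; rewrite pfactor_dvdn ?irredp_deg_gt0 // min_f0.
apply: strong_lambdaP; [|exact: dvd_deg|].
  rewrite dvdn_exp2l // -(leq_exp2l _ _ (prime_gt1 p_prime)).
  by rewrite (leq_trans _ (deg_dvd_XnsubC pk_gt0 f0_dvd)) // dvdn_leq ?irredp_deg_gt0 ?dvd_deg.
have [[z [zp z_neq1]]|no_root1] := classic (exists z : K, z ^+ p = 1 /\ z != 1).
  have [e De] := irredp_dvd_ppow_deg p_prime zp z_neq1 irr_f0 f0_dvd.
  by exists f0; rewrite /i De pfactorK.
apply: exists_irredp_dvd_ppow_le => // z zp.
by have [//|z_neq1] := eqVneq z 1; case: no_root1; exists z.
Qed.

End PrimePower.

Lemma strong_lambda_exists (K : fieldType) (a : K) n : a != 0 -> (0 < n)%N ->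
  exists d, strong_lambda a n d.
Proof.
move=> a_neq0; elim/ltn_ind: n => n IH n_gt0.
have [->|n_neq1] := eqVneq n 1%N; first exact: (strong_lambda_ppow 0 a_neq0 (isT : prime 2)).
have n_gt1 : (1 < n)%N by rewrite ltn_neqAle eq_sym n_neq1.
have p_prime := pdiv_prime n_gt1; set p := pdiv n in p_prime.
have [m cop_pm Dn] := pfactor_coprime p_prime n_gt0; set k := logn p n in Dn.
have m_gt0 : (0 < m)%N by move: n_gt0; rewrite Dn muln_gt0 => /andP[].
have pk_gt1 : (1 < p ^ k)%N.
  by rewrite -{1}(expn0 p) ltn_exp2l ?prime_gt1 // logn_gt0 mem_primes p_prime n_gt0 pdiv_dvd.
have m_lt_n : (m < n)%N by rewrite Dn ltn_Pmulr.
have [dm lam_m] := IH m m_lt_n m_gt0.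
have [dq lam_q] := strong_lambda_ppow k a_neq0 p_prime.
exists (dm * dq)%N; rewrite Dn; apply: strong_lambda_mul => //.
  exact: ltnW.
by rewrite coprime_sym coprimeXl.
Qed.

Theorem proposition1p4 (K : fieldType) (a : K) (m n : nat) :
  [pchar K] =i pred0 ->
  (0 < m)%N -> (0 < n)%N -> coprime m n ->
  forall dm dn dmn : nat,
    is_lambda a m dm -> is_lambda a n dn -> is_lambda a (m * n) dmn ->
    (dm * dn)%N = dmn.
Proof.
move=> _ m_gt0 n_gt0 cop_mn dm dn dmn lam_m lam_n lam_mn.
have mn_gt0 : (0 < m * n)%N by rewrite muln_gt0 m_gt0.
have [a0|a_neq0] := eqVneq a 0.
  move: lam_m lam_n lam_mn; rewrite a0 => lam_m lam_n lam_mn.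
  rewrite (strong_lambda_is_lambda (strong_lambda0 _ m_gt0) lam_m).
  rewrite (strong_lambda_is_lambda (strong_lambda0 _ n_gt0) lam_n).
  by rewrite (strong_lambda_is_lambda (strong_lambda0 _ mn_gt0) lam_mn).
have [em sl_m] := strong_lambda_exists a_neq0 m_gt0.
have [en sl_n] := strong_lambda_exists a_neq0 n_gt0.
have sl_mn := strong_lambda_mul a_neq0 m_gt0 n_gt0 cop_mn sl_m sl_n.
rewrite (strong_lambda_is_lambda sl_m lam_m) (strong_lambda_is_lambda sl_n lam_n).
by rewrite (strong_lambda_is_lambda sl_mn lam_mn).
Qed.
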